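(* Let $G$ be a finite group, let $R$ be a Cayley subset of $G$, and suppose $\Gamma:=\mathrm{Cay}(G,R)$ is a GRR. Then either $|\Gamma[R]_I|\le 1$ or $|\Gamma^c[R^c]_I|\le 1$. Moreover, when $|G|>2$, either $G=\langle R\setminus\Gamma[R]_I\rangle$ and $|\Gamma[R]_I|\le 1$, or $G=\langle R^c\setminus\Gamma^c[R^c]_I\rangle$ and $|\Gamma^c[R^c]_I|\le 1$.
   Context: A Cayley subset of $G$ is a subset $R$ with $R=R^{-1}$ and $1\notin R$. $\mathrm{Cay}(G,R)$ is the graph with vertex set $G$ and edges $\{g,rg\}$ for $g\in G$, $r\in R$. It is a GRR if its automorphism group equals the group of right multiplications by elements of $G$ (equivalently, is isomorphic to $G$). $R^c:=G\setminus(\{1\}\cup R)$ and $\Gamma^c=\mathrm{Cay}(G,R^c)$ is the complement of $\Gamma$. For a graph $\Sigma$ and a vertex subset $X$, $\Sigma[X]_I$ denotes the set of isolated vertices of the subgraph of $\Sigma$ induced on $X$, i.e. the $v\in X$ with no neighbour in $X$. *)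

From mathcomp Require Import all_boot all_fingroup.
Set Implicit Arguments. Unset Strict Implicit. Unset Printing Implicit Defensive.
Local Open Scope group_scope.

Section Cayley.
Variable gT : finGroupType.

Definition cayley_subset (R : {set gT}) : Prop :=
  R^-1 = R /\ (1 : gT) \notin R.

(* adjacency in Cay(G,R): edges {g, r g}, i.e. x ~ y iff y x^-1 \in R *)
Definition cay_adj (R : {set gT}) (x y : gT) : bool := (y * x^-1) \in R.

Definition cay_aut (R : {set gT}) (s : {perm gT}) : Prop :=
  forall x y, cay_adj R (s x) (s y) = cay_adj R x y.

Definition is_GRR (R : {set gT}) : Prop :=
  forall s : {perm gT}, cay_aut R s <-> exists h : gT, forall x, s x = x * h.

Definition cay_compl (R : {set gT}) : {set gT} := ~: ((1 : gT) |: R).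

(* Sigma[X]_I for Sigma = Cay(G,R): isolated vertices of induced subgraph on X *)
Definition isolated (R X : {set gT}) : {set gT} :=
  [set v in X | [forall w in X, ~~ cay_adj R v w]].
End Cayley.

(* If u in R is isolated in Gamma[R] and v in R^c is isolated in Gamma^c[R^c],
   then 1 and u are adjacent without common neighbour, while 1 and v are
   non-adjacent and dominate all other vertices.  As Gamma and Gamma^c have the
   same automorphisms we may assume u ~ v; then (1 uv)(u v) is an automorphism,
   which in a GRR forces G = {1, u, v, uv}, where u and uv are twins: a
   contradiction.  So one of the two isolated sets is empty, and the generation
   claim is connectivity of a GRR on more than two vertices: otherwise right
   multiplication by an element of <R> on <R> only is a non-regular
   automorphism, or R is empty and any two non-identity vertices are twins. *)

From mathcomp Require Import all_boot all_fingroup.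
Set Implicit Arguments. Unset Strict Implicit. Unset Printing Implicit Defensive.
Local Open Scope group_scope.

Section CayleyGraph.
Variable gT : finGroupType.
Implicit Types (R : {set gT}) (x y z h : gT) (s t : {perm gT}).

Lemma cay_adj1 R z : cay_adj R 1 z = (z \in R).
Proof. by rewrite /cay_adj invg1 mulg1. Qed.

Lemma cay_adjxx R x : 1 \notin R -> cay_adj R x x = false.
Proof. by move=> R1; rewrite /cay_adj mulgV (negbTE R1). Qed.

Lemma cay_adj_sym R x y : R^-1 = R -> cay_adj R x y = cay_adj R y x.
Proof. by move=> invR; rewrite /cay_adj -{1}invR mem_invg invMg invgK. Qed.

Lemma cay_adjMr R x y h : cay_adj R (x * h) (y * h) = cay_adj R x y.
Proof. by rewrite /cay_adj invMg mulgA mulgK. Qed.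

Lemma cay_adj_compl R x y :
  cay_adj (cay_compl R) x y = (x != y) && ~~ cay_adj R x y.
Proof. by rewrite /cay_adj !inE negb_or -eq_mulgV1 eq_sym. Qed.

Definition cay_nbhd R x : {set gT} := [set y | cay_adj R x y].

Lemma card_cay_nbhd R x : #|cay_nbhd R x| = #|R|.
Proof.
have -> : cay_nbhd R x = R :* x by apply/setP=> y; rewrite inE mem_rcoset.
exact: card_rcoset.
Qed.

Lemma cayley_subset_compl R : cayley_subset R -> cayley_subset (cay_compl R).
Proof.
case=> invR _; split; last by rewrite !inE eqxx.
by apply/setP => x; rewrite mem_invg !inE invg_eq1 -mem_invg invR.
Qed.

Lemma cay_complK R : 1 \notin R -> cay_compl (cay_compl R) = R.
Proof.
move=> R1; apply/setP => x; rewrite !inE.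
by case: eqP => [->|_] /=; rewrite ?negbK ?(negbTE R1).
Qed.

Lemma cay_aut_compl R s : cay_aut (cay_compl R) s <-> cay_aut R s.
Proof.
have eq_s x y : (s x != s y) = (x != y) by rewrite (inj_eq perm_inj).
split=> aut_s x y.
  have [->|xy] := eqVneq x y; first by rewrite /cay_adj !mulgV.
  by apply: negb_inj; have := aut_s x y; rewrite !cay_adj_compl eq_s xy.
by rewrite !cay_adj_compl eq_s aut_s.
Qed.

Lemma is_GRR_compl R : is_GRR R -> is_GRR (cay_compl R).
Proof. by move=> grrR s; apply: iff_trans (cay_aut_compl R s) (grrR s). Qed.

Lemma GRR_autE R s : is_GRR R -> cay_aut R s -> forall x, s x = x * s 1.
Proof. by move=> grrR /grrR[h sE] x; rewrite !sE mul1g. Qed.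

Lemma nbhd_involution_swap R t x y : involutive t ->
  (forall z, cay_adj R x z -> cay_adj R y (t z)) ->
  forall z, cay_adj R y z -> cay_adj R x (t z).
Proof.
move=> tK sub_xy z yz.
have sub : t @: cay_nbhd R x \subset cay_nbhd R y.
  by apply/subsetP=> _ /imsetP[z' + ->]; rewrite !inE => /sub_xy.
have /eqP t_nbhd : t @: cay_nbhd R x == cay_nbhd R y.
  by rewrite eqEcard sub card_imset ?card_cay_nbhd //=; apply: perm_inj.
have : z \in t @: cay_nbhd R x by rewrite t_nbhd inE.
by case/imsetP=> z' + ->; rewrite tK inE.
Qed.

Lemma involutive_cay_aut R t : R^-1 = R -> involutive t ->
  (forall x, t x != x -> forall z, cay_adj R x z -> cay_adj R (t x) (t z)) ->
  cay_aut R t.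
Proof.
move=> invR tK moved.
have fwd x z : cay_adj R x z -> cay_adj R (t x) (t z).
  case: (eqVneq (t x) x) => [tx|tx]; last exact: moved tx z.
  case: (eqVneq (t z) z) => [tz|tz]; first by rewrite tx tz.
  rewrite tx [cay_adj _ x (t z)]cay_adj_sym // [cay_adj _ x z]cay_adj_sym //.
  by move=> /(moved z tz); rewrite tx.
by move=> x y; apply/idP/idP=> [/fwd|/fwd//]; rewrite !tK.
Qed.

Lemma tperm_twins_cay_aut R x y : cayley_subset R ->
  (forall z, z != x -> z != y -> cay_adj R x z = cay_adj R y z) ->
  cay_aut R (tperm x y).
Proof.
move=> [invR R1] twins; apply: involutive_cay_aut => //; first exact: tpermK.
move=> a; case: (tpermP x y a) => [->|->|_ _]; rewrite ?eqxx // => _ z;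
  case: (tpermP x y z) => [->|->|/eqP zx /eqP zy];
  by rewrite ?cay_adjxx ?(twins z) // cay_adj_sym.
Qed.

Lemma GRR_twins R x y : cayley_subset R -> is_GRR R -> x != 1 -> y != 1 ->
  (forall z, z != x -> z != y -> cay_adj R x z = cay_adj R y z) -> x = y.
Proof.
move=> csR grrR x1 y1 twins.
have := GRR_autE grrR (tperm_twins_cay_aut csR twins) x.
by rewrite tpermL tpermD // mulg1 => ->.
Qed.

Definition mulg_on (H : {set gT}) c x := if x \in H then x * c else x.

Lemma mulg_on_inj (H : {group gT}) c : c \in H -> injective (mulg_on H c).
Proof.
move=> cH x y; rewrite /mulg_on.
case: ifP => xH; case: ifP => yH; [exact: mulIg| move=> xy | move=> xy | by []].
  by move: yH; rewrite -xy (groupMr _ cH) xH.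
by move: xH; rewrite xy (groupMr _ cH) yH.
Qed.

Lemma cay_adj_subgroup R (H : {group gT}) x y :
  R \subset H -> cay_adj R x y -> (x \in H) = (y \in H).
Proof. by move=> sRH /(subsetP sRH) yx; rewrite -(groupMl x yx) mulgVK. Qed.

Lemma cay_aut_mulg_on R (H : {group gT}) c (cH : c \in H) :
  R \subset H -> cay_aut R (perm (mulg_on_inj cH)).
Proof.
move=> sRH x y; rewrite !permE /mulg_on.
case: ifP => xH; case: ifP => yH; rewrite ?cay_adjMr //.
all: by apply/idP/idP => /(cay_adj_subgroup sRH); rewrite ?(groupMr _ cH) xH yH.
Qed.

Lemma GRR_generated R : cayley_subset R -> is_GRR R -> 2 < #|gT| ->
  <<R>> = [set: gT].
Proof.
move=> csR grrR gt2; apply/eqP; rewrite eqEsubset subsetT /=.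
apply/subsetP => g _; apply/negPn/negP => gNR.
have sRR := subset_gen R.
have [RR1|/trivgPn[c cR c1]] := eqVneq <<R>> 1; last first.
  have := GRR_autE grrR (cay_aut_mulg_on cR sRR) g.
  rewrite !permE /mulg_on (negbTE gNR) group1 mul1g -{1}[g]mulg1 => /mulgI c1'.
  by rewrite -c1' eqxx in c1.
have R0 z : z \notin R.
  apply: contraNN (proj2 csR) => zR.
  by have := subsetP sRR z zR; rewrite RR1 inE => /eqP <-.
have /card_gt1P[a [b [a1 b1 ab]]] : 1 < #|[set~ (1 : gT)]|.
  by rewrite cardsC1 -ltnS (ltn_predK gt2).
rewrite !inE in a1 b1; apply: (negP ab); apply/eqP.
by apply: (GRR_twins csR grrR a1 b1) => z _ _; rewrite /cay_adj !(negbTE (R0 _)).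
Qed.

Section AdjacentIsolatedPair.
Variables (R : {set gT}) (u v : gT).
Hypotheses (csR : cayley_subset R) (grrR : is_GRR R).
Hypothesis u_iso : u \in isolated R R.
Hypothesis v_iso : v \in isolated (cay_compl R) (cay_compl R).
Hypothesis adj_uv : cay_adj R u v.

Local Notation adj := (cay_adj R).
Let w := u * v.

Let R1 : 1 \notin R := proj2 csR.
Let sym x y : adj x y = adj y x := cay_adj_sym x y (proj1 csR).

Let uR : u \in R. Proof. by case/setIdP: u_iso. Qed.
Let vNR : v \notin R.
Proof. by case/setIdP: v_iso; rewrite !inE negb_or => /andP[]. Qed.
Let v1 : v != 1.
Proof. by case/setIdP: v_iso; rewrite !inE negb_or => /andP[]. Qed.
Let u1 : u != 1. Proof. by apply: contraNneq R1 => <-. Qed.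
Let wu : w != u. Proof. by rewrite /w -{2}[u]mulg1 (inj_eq (mulgI u)). Qed.
Let wv : w != v. Proof. by rewrite /w -{2}[v]mul1g (inj_eq (mulIg v)). Qed.
Let w1 : w != 1.
Proof.
apply: contraNneq vNR => w_eq1.
have -> : v = u^-1 by rewrite -(mulKg u v) -/w w_eq1 mulg1.
by rewrite -(proj1 csR) mem_invg invgK.
Qed.

Let no_common_nbr_1u z : adj 1 z -> ~~ adj u z.
Proof. by rewrite cay_adj1; case/setIdP: u_iso => _ /forall_inP; apply. Qed.

Let no_common_nbr_vw z : adj v z -> ~~ adj w z.
Proof.
rewrite -(cay_adjMr _ v _ v^-1) -(cay_adjMr _ w _ v^-1) mulgV /w mulgK.
exact: no_common_nbr_1u.
Qed.

Let adj_wu : adj w u = false.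
Proof. by apply/negbTE/no_common_nbr_vw; rewrite sym. Qed.

Let dominating_1v z : z != 1 -> z != v -> adj 1 z || adj v z.
Proof.
move=> z1 zv; rewrite cay_adj1; have [//|zNR /=] := boolP (z \in R).
case/setIdP: v_iso => _ /forall_inP /(_ z); rewrite cay_adj_compl eq_sym zv /=.
by rewrite negbK; apply; rewrite !inE negb_or z1.
Qed.

(* Right multiplication by v sends the edge {1, u} to {v, w}, so v and w have
   no common neighbour; with 1 and v dominating all other vertices, this makes
   the double transposition below an automorphism. *)
Let t := tperm 1 w * tperm u v.

Let t1 : t 1 = w. Proof. by rewrite /t permM tpermL tpermD // eq_sym. Qed.
Let tw : t w = 1. Proof. by rewrite /t permM tpermR tpermD // eq_sym. Qed.
Let tu : t u = v.
Proof. by rewrite /t permM (tpermD (_ : 1 != u)) ?tpermL // eq_sym. Qed.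
Let tv : t v = u.
Proof. by rewrite /t permM (tpermD (_ : 1 != v)) ?tpermR // eq_sym. Qed.
Let tD z : z != 1 -> z != w -> z != u -> z != v -> t z = z.
Proof. by move=> z1 zw zu zv; rewrite /t permM !tpermD // eq_sym. Qed.

Let tK : involutive t.
Proof.
move=> z; have [->|z1] := eqVneq z 1; first by rewrite t1 tw.
have [->|zw] := eqVneq z w; first by rewrite tw t1.
have [->|zu] := eqVneq z u; first by rewrite tu tv.
have [->|zv] := eqVneq z v; first by rewrite tv tu.
by rewrite !tD.
Qed.

Let nbr_w z : adj w z -> adj 1 (t z).
Proof.
have [->|z1] := eqVneq z 1; first by rewrite t1 sym.
have [->|zw] := eqVneq z w; first by rewrite cay_adjxx.
have [->|zu] := eqVneq z u; first by rewrite adj_wu.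
have [->|zv] := eqVneq z v; first by rewrite tv cay_adj1.
rewrite tD // => wz.
by case/orP: (dominating_1v z1 zv) => // /no_common_nbr_vw; rewrite wz.
Qed.

Let nbr_u z : adj u z -> adj v (t z).
Proof.
have [->|z1] := eqVneq z 1; first by rewrite t1 /cay_adj /w mulgK.
have [->|zw] := eqVneq z w; first by rewrite sym adj_wu.
have [->|zu] := eqVneq z u; first by rewrite cay_adjxx.
have [->|zv] := eqVneq z v; first by rewrite tv sym.
rewrite tD // => uz.
by case/orP: (dominating_1v z1 zv) => // /no_common_nbr_1u; rewrite uz.
Qed.

Let t_aut : cay_aut R t.
Proof.
apply: involutive_cay_aut (proj1 csR) tK _ => x.
have [->|x1] := eqVneq x 1; first by rewrite t1 => _; apply: nbhd_involution_swap.
have [->|xw] := eqVneq x w; first by rewrite tw => _.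
have [->|xu] := eqVneq x u; first by rewrite tu => _.
have [->|xv] := eqVneq x v; first by rewrite tv => _; apply: nbhd_involution_swap.
by rewrite tD ?eqxx.
Qed.

Let tE z : t z = z * w.
Proof. by rewrite (GRR_autE grrR t_aut) t1. Qed.

(* t is right multiplication by w != 1, so it has no fixed point. *)
Let four_points z : [|| z == 1, z == w, z == u | z == v].
Proof.
apply/negPn/negP; rewrite !negb_or => /and4P[z1 zw zu zv].
by move: w1; rewrite -(inj_eq (mulgI z)) mulg1 -tE tD ?eqxx.
Qed.

Let adj_1w : adj 1 w.
Proof.
rewrite cay_adj1; apply: contraT => wNR.
have R_le1 : #|R| <= 1.
  rewrite -(cards1 u); apply/subset_leq_card/subsetP => z zR; rewrite inE.
  case/or4P: (four_points z) => /eqP zE; move: zR; rewrite zE ?eqxx // => zR;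
  by [case/negP: R1 | case/negP: wNR | case/negP: vNR].
have : 2 <= #|R|.
  have <- : #|[set 1; v]| = 2 by rewrite cards2 eq_sym v1.
  rewrite -(card_cay_nbhd R u).
  apply/subset_leq_card/subsetP => z; rewrite !inE.
  by case/orP=> /eqP->; rewrite // sym cay_adj1.
by rewrite leqNgt ltnS R_le1.
Qed.

Lemma not_GRR_adj_isolated_pair : False.
Proof.
suff twins z : z != u -> z != w -> adj u z = adj w z.
  by move: wu; rewrite (GRR_twins csR grrR u1 w1 twins) eqxx.
case/or4P: (four_points z) => /eqP -> //; rewrite ?eqxx //.
  by rewrite (sym u) (sym w) adj_1w cay_adj1 uR.
by rewrite adj_uv sym /cay_adj /w mulgK uR.
Qed.

End AdjacentIsolatedPair.

End CayleyGraph.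

Lemma GRR_isolated0 (gT : finGroupType) (R : {set gT}) :
  cayley_subset R -> is_GRR R ->
  isolated R R = set0 \/ isolated (cay_compl R) (cay_compl R) = set0.
Proof.
move=> csR grrR.
have [->|[u u_iso]] := set_0Vmem (isolated R R); first by left.
have [->|[v v_iso]] := set_0Vmem (isolated (cay_compl R) (cay_compl R)).
  by right.
have [uR _] := setIdP u_iso.
have [+ _] := setIdP v_iso; rewrite !inE negb_or => /andP[_ vNR].
exfalso; have [uv|uNv] := boolP (cay_adj R u v).
  exact: not_GRR_adj_isolated_pair csR grrR u_iso v_iso uv.
rewrite -(cay_complK (proj2 csR)) in u_iso.
apply: not_GRR_adj_isolated_pair (cayley_subset_compl csR) (is_GRR_compl grrR)
  v_iso u_iso _.
rewrite cay_adj_compl cay_adj_sym ?uNv ?andbT; last exact: proj1 csR.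
by apply: contraNneq vNR => ->.
Qed.

Theorem lemma2p2 (gT : finGroupType) (R : {set gT}) :
  cayley_subset R -> is_GRR R ->
  ((#|isolated R R| <= 1)%N \/
   (#|isolated (cay_compl R) (cay_compl R)| <= 1)%N) /\
  ((2 < #|[set: gT]|)%N ->
   (<<R :\: isolated R R>> = [set: gT] /\ (#|isolated R R| <= 1)%N) \/
   (<<cay_compl R :\: isolated (cay_compl R) (cay_compl R)>> = [set: gT] /\
    (#|isolated (cay_compl R) (cay_compl R)| <= 1)%N)).
Proof.
move=> csR grrR; rewrite cardsT.
have csRc := cayley_subset_compl csR; have grrRc := is_GRR_compl grrR.
case: (GRR_isolated0 csR grrR) => ->; rewrite setD0 cards0.
  by split=> [|gt2]; left; rewrite // GRR_generated.
by split=> [|gt2]; right; rewrite // GRR_generated.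
Qed.
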